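(* Let $R_0^*\in SO(3)$ with unit quaternion representation $w_0^*\in\mathbb{S}^3$, let $x_1,\dots,x_\ell\in\mathbb{R}^3$, $y_i=R_0^*x_i$ for all $i=1,\dots,\ell$ (no noise and no outliers), and $c_1^2,\dots,c_\ell^2\ge0$. Let $\omega^*=[w_0^*;\dots;w_0^*]\in\mathbb{R}^{4(\ell+1)}$ ($w_0^*$ repeated $\ell+1$ times). Then $\omega^*$ is a global minimizer of (QCQP) and $\omega^*(\omega^* )^\top$ globally minimizes (SDR); in particular (SDR) is tight.
   Context: For $w=[w_1;w_2;w_3;w_4]\in\mathbb{S}^3$, $R(w)=\begin{bmatrix} w_1^2+w_2^2-w_3^2-w_4^2 & 2(w_2w_3-w_1w_4) & 2(w_2w_4+w_1w_3)\\ 2(w_2w_3+w_1w_4) & w_1^2+w_3^2-w_2^2-w_4^2 & 2(w_3w_4-w_1w_2)\\ 2(w_2w_4-w_1w_3) & 2(w_3w_4+w_1w_2) & w_1^2+w_4^2-w_2^2-w_3^2\end{bmatrix}\in SO(3)$; $w$ and $-w$ are the unit quaternion representations of $R(w)$. $Q_i$ is the unique symmetric $4\times4$ matrix with $w^\top Q_iw=\|y_i-R(w)x_i\|_2^2$ for all $w\in\mathbb{S}^3$. For $\mathcal{A}\in\mathbb{R}^{4(\ell+1)\times4(\ell+1)}$, $[\mathcal{A}]_{ij}$ ($0\le i,j\le\ell$) is the $4\times4$ block in rows $4i+1..4i+4$, columns $4j+1..4j+4$. $\mathcal{Q}$ is symmetric with $[\mathcal{Q}]_{0i}=[\mathcal{Q}]_{i0}=\frac12(Q_i-c_i^2I_4)$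 ($i\ge1$), other blocks zero. (QCQP): minimize $\operatorname{tr}(\mathcal{Q}\omega\omega^\top)+\sum_ic_i^2$ over $\omega\in\mathbb{R}^{4(\ell+1)}$ s.t. $[\omega\omega^\top]_{0i}=[\omega\omega^\top]_{ii}$ ($i=1..\ell$), $\operatorname{tr}([\omega\omega^\top]_{00})=1$. (SDR): minimize $\operatorname{tr}(\mathcal{Q}\mathcal{W})+\sum_ic_i^2$ over symmetric $\mathcal{W}\succeq0$ s.t. $[\mathcal{W}]_{0i}=[\mathcal{W}]_{ii}$ ($i=1..\ell$), $\operatorname{tr}([\mathcal{W}]_{00})=1$. (SDR) is tight if it admits $\hat\omega\hat\omega^\top$ as a global minimizer, where $\hat\omega$ is a global minimizer of (QCQP). *)

From HB Require Import structures.
From mathcomp Require Import all_boot all_order all_algebra.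
Set Implicit Arguments. Unset Strict Implicit. Unset Printing Implicit Defensive.
Import Order.TTheory GRing.Theory Num.Theory.
Local Open Scope ring_scope.

Section Defs.
Variable R : realFieldType.

Definition sqnorm n (v : 'cV[R]_n) : R := \sum_(i < n) v i 0 ^+ 2.

Definition on_sphere n (v : 'cV[R]_n) : Prop := sqnorm v = 1.

(* quaternion components w_1..w_4 (1-based, as in the paper) *)
Definition qc (w : 'cV[R]_4) (k : nat) : R := w (inord k.-1) 0.

Definition Rq (w : 'cV[R]_4) : 'M[R]_3 :=
  let w1 := qc w 1 in let w2 := qc w 2 in let w3 := qc w 3 in let w4 := qc w 4 in
  \matrix_(i < 3, j < 3)
    match val i, val j with
    | 0, 0 => w1^+2 + w2^+2 - w3^+2 - w4^+2
    | 0, 1 => 2 * (w2 * w3 - w1 * w4)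
    | 0, _ => 2 * (w2 * w4 + w1 * w3)
    | 1, 0 => 2 * (w2 * w3 + w1 * w4)
    | 1, 1 => w1^+2 + w3^+2 - w2^+2 - w4^+2
    | 1, _ => 2 * (w3 * w4 - w1 * w2)
    | _, 0 => 2 * (w2 * w4 - w1 * w3)
    | _, 1 => 2 * (w3 * w4 + w1 * w2)
    | _, _ => w1^+2 + w4^+2 - w2^+2 - w3^+2
    end.

Lemma bidx_proof n (i : 'I_n) (a : 'I_4) : (4 * i + a < 4 * n)%N.
Proof.
have ha := ltn_ord a; have hi := ltn_ord i.
apply: (@leq_trans (4 * i + 4)%N); first by rewrite ltn_add2l.
by rewrite -mulnSr leq_mul2l.
Qed.

(* global index of entry a of block i, i.e. 4i + a (0-based) *)
Definition bidx n (i : 'I_n) (a : 'I_4) : 'I_(4 * n) := Ordinal (bidx_proof i a).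

Definition block n (A : 'M[R]_(4 * n)) (i j : 'I_n) : 'M[R]_4 :=
  \matrix_(a < 4, b < 4) A (bidx i a) (bidx j b).

(* [w; w; ...; w] (n copies) *)
Definition rep n (w : 'cV[R]_4) : 'cV[R]_(4 * n) :=
  \col_(p < 4 * n) w (Ordinal (ltn_pmod p (isT : (0 < 4)%N))) 0.

(* the matrix calQ, characterized blockwise; block index 0 is None,
   block index i >= 1 is Some (i-1) via unlift ord0 *)
Definition calQ_blocks l (Q : 'I_l -> 'M[R]_4) (c2 : 'I_l -> R)
  (I J : 'I_l.+1) : 'M[R]_4 :=
  match unlift ord0 I, unlift ord0 J with
  | None, Some j => 2^-1 *: (Q j - (c2 j)%:M)
  | Some i, None => 2^-1 *: (Q i - (c2 i)%:M)
  | _, _ => 0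
  end.

Definition is_calQ l (Q : 'I_l -> 'M[R]_4) (c2 : 'I_l -> R)
  (calQ : 'M[R]_(4 * l.+1)) : Prop :=
  forall I J : 'I_l.+1, block calQ I J = calQ_blocks Q c2 I J.

Definition obj l (calQ : 'M[R]_(4 * l.+1)) (c2 : 'I_l -> R)
  (W : 'M[R]_(4 * l.+1)) : R := \tr (calQ *m W) + \sum_(i < l) c2 i.

Definition lin_feasible l (W : 'M[R]_(4 * l.+1)) : Prop :=
  (forall i : 'I_l, block W ord0 (lift ord0 i) = block W (lift ord0 i) (lift ord0 i))
  /\ \tr (block W ord0 ord0) = 1.

Definition psd n (W : 'M[R]_n) : Prop :=
  W^T = W /\ forall v : 'cV[R]_n, 0 <= (v^T *m W *m v) 0 0.

Definition qcqp_feasible l (om : 'cV[R]_(4 * l.+1)) : Prop :=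
  lin_feasible (om *m om^T).

Definition sdr_feasible l (W : 'M[R]_(4 * l.+1)) : Prop :=
  psd W /\ lin_feasible W.

Definition qcqp_global_min l calQ c2 (om : 'cV[R]_(4 * l.+1)) : Prop :=
  qcqp_feasible om /\
  forall om', qcqp_feasible om' -> obj calQ c2 (om *m om^T) <= obj calQ c2 (om' *m om'^T).

Definition sdr_global_min l calQ c2 (W : 'M[R]_(4 * l.+1)) : Prop :=
  sdr_feasible W /\
  forall W', sdr_feasible W' -> obj calQ c2 W <= obj calQ c2 W'.

Definition sdr_tight l calQ c2 : Prop :=
  exists om : 'cV[R]_(4 * l.+1),
    qcqp_global_min calQ c2 om /\ sdr_global_min calQ c2 (om *m om^T).

End Defs.

From HB Require Import structures.
From mathcomp Require Import all_boot all_order all_algebra.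
From mathcomp Require Import ring lra zify.
Import Order.TTheory GRing.Theory Num.Theory.
Set Implicit Arguments. Unset Strict Implicit. Unset Printing Implicit Defensive.
Local Open Scope ring_scope.

(* Write B_i for the diagonal block [W]_ii of a feasible W. Symmetry and the
   constraints [W]_0i = [W]_ii turn the objective into
   sum_i tr(Q_i B_i) + c_i^2 (1 - tr B_i).  Without noise, Q_i is the Gram
   matrix L_i^T L_i of the linear map w |-> y_i w - w x_i (quaternion
   products), so tr(Q_i B_i) >= 0 when W is PSD; positive semidefiniteness of
   W also gives tr B_i <= tr [W]_00 = 1, entry by entry from the 2x2
   principal minors.  So the SDR objective is nonnegative on its feasible
   set, while the rank-one point built from w_0^* attains 0. *)

Lemma sum_bidx (V : nmodType) n (F : 'I_(4 * n) -> V) :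
  \sum_p F p = \sum_I \sum_a F (bidx I a).
Proof.
have div_lt (p : 'I_(4 * n)) : (p %/ 4 < n)%N.
  by rewrite ltn_divLR //; have := ltn_ord p; lia.
have mod_lt (p : 'I_(4 * n)) : (p %% 4 < 4)%N by rewrite ltn_mod.
rewrite pair_big (reindex (fun Ia : 'I_n * 'I_4 => bidx Ia.1 Ia.2)) //=.
exists (fun p => (Ordinal (div_lt p), Ordinal (mod_lt p))) => [[I a] _ | p _].
- by congr pair; apply: val_inj => /=; have := ltn_ord a; lia.
- by apply: val_inj => /=; have := divn_eq p 4; lia.
Qed.

Section Blocks.
Variable R : realFieldType.

Lemma block_mxsub n (A : 'M[R]_(4 * n)) I J : block A I J = mxsub (bidx I) (bidx J) A.
Proof. by apply/matrixP => a b; rewrite !mxE. Qed.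

Lemma block_trmx n (A : 'M[R]_(4 * n)) I J : block A^T I J = (block A J I)^T.
Proof. by rewrite !block_mxsub trmx_mxsub. Qed.

Lemma mxtrace_mul_blocks n (A W : 'M[R]_(4 * n)) :
  \tr (A *m W) = \sum_I \sum_J \tr (block A I J *m block W J I).
Proof.
rewrite /mxtrace sum_bidx; apply: eq_bigr => I _.
rewrite (eq_bigr (fun a =>
    \sum_J \sum_b A (bidx I a) (bidx J b) * W (bidx J b) (bidx I a))); last first.
  by move=> a _; rewrite mxE sum_bidx.
rewrite exchange_big; apply: eq_bigr => J _; apply: eq_bigr => a _.
by rewrite !mxE; apply: eq_bigr => b _; rewrite !mxE.
Qed.
End Blocks.

Section QuadraticForms.
Variable R : realFieldType.

Lemma sqnorm_qform n (v : 'cV[R]_n) : sqnorm v = (v^T *m v) 0 0.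
Proof. by rewrite mxE; apply: eq_bigr => i _; rewrite mxE expr2. Qed.

Lemma qform_delta2 n (M : 'M[R]_n) a b (al be : R) :
  ((al *: delta_mx a 0 + be *: delta_mx b 0 : 'cV[R]_n)^T *m M
     *m (al *: delta_mx a 0 + be *: delta_mx b 0 : 'cV[R]_n)) 0 0
  = al ^+ 2 * M a a + al * be * (M a b + M b a) + be ^+ 2 * M b b.
Proof.
have entry p q : ((delta_mx 0 p : 'rV[R]_n) *m M *m (delta_mx q 0 : 'cV[R]_n)) 0 0
    = M p q.
  by rewrite -rowE -colE !mxE.
rewrite !linearD !linearZ /= !trmx_delta !mulmxDl -!scalemxAl.
by rewrite !(entry, mxE); ring.
Qed.

Lemma psd_outer n (om : 'cV[R]_n) : psd (om *m om^T).
Proof.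
split; first by rewrite trmx_mul trmxK.
move=> v; have -> : v^T *m (om *m om^T) *m v = (om^T *m v)^T *m (om^T *m v).
  by rewrite trmx_mul trmxK !mulmxA.
by rewrite -sqnorm_qform; apply: sumr_ge0 => k _; exact: sqr_ge0.
Qed.

Lemma psd_mxsub m n (f : 'I_m -> 'I_n) (W : 'M[R]_n) : psd W -> psd (mxsub f f W).
Proof.
move=> [symW psdW].
have -> : mxsub f f W = rowsub f 1%:M *m W *m (rowsub f 1%:M)^T.
  by rewrite trmx_mxsub trmx1 -mulmxA mulmx_colsub mulmx1 -mxsub_mul mul1mx.
split; first by rewrite !trmx_mul trmxK symW mulmxA.
move=> v; have := psdW ((rowsub f 1%:M)^T *m v).
by rewrite trmx_mul trmxK !mulmxA.
Qed.

Lemma psd_entry_diff_ge0 n (W : 'M[R]_n) p q :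
  psd W -> 0 <= W p p - W p q - W q p + W q q.
Proof.
move=> [_ psdW]; have := psdW (1 *: delta_mx p 0 + (-1) *: delta_mx q 0).
by rewrite qform_delta2; lra.
Qed.

Lemma mxtrace_gram_mul_psd_ge0 m n (L : 'M[R]_(m, n)) (B : 'M[R]_n) :
  psd B -> 0 <= \tr (L^T *m L *m B).
Proof.
move=> [_ psdB]; rewrite -mulmxA mxtrace_mulC; apply: sumr_ge0 => k _.
have -> : (L *m B *m L^T) k k = ((row k L) *m B *m (row k L)^T) 0 0.
  rewrite !mxE; apply: eq_bigr => j _; rewrite !mxE; congr (_ * _).
  by apply: eq_bigr => i _; rewrite !mxE.
by have := psdB (row k L)^T; rewrite trmxK.
Qed.

Lemma sym_mx_eq_on_sphere n (P Q : 'M[R]_n) : P^T = P -> Q^T = Q ->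
  (forall w, on_sphere w -> (w^T *m P *m w) 0 0 = (w^T *m Q *m w) 0 0) -> P = Q.
Proof.
move=> symP symQ eqPQ.
have sqnorm2 a b (al be : R) :
    sqnorm (al *: delta_mx a 0 + be *: delta_mx b 0 : 'cV[R]_n)
    = al ^+ 2 + al * be * ((a == b)%:R + (b == a)%:R) + be ^+ 2.
  by rewrite sqnorm_qform -[X in X *m _]mulmx1 qform_delta2 !mxE !eqxx !mulr1.
have eq2 a b (al be : R) :
    al ^+ 2 + al * be * ((a == b)%:R + (b == a)%:R) + be ^+ 2 = 1 ->
    al ^+ 2 * P a a + al * be * (P a b + P b a) + be ^+ 2 * P b b
    = al ^+ 2 * Q a a + al * be * (Q a b + Q b a) + be ^+ 2 * Q b b.
  by rewrite -sqnorm2 -!qform_delta2; exact: eqPQ.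
have eq_diag c : P c c = Q c c.
  by have := eq2 c c 1 0; rewrite !(mulr0, mul0r, expr0n, expr1n, mul1r, addr0); apply.
apply/matrixP => a b; have [<-|neq_ab] := eqVneq a b; first exact: eq_diag.
have := eq2 a b (3 / 5) (4 / 5).
rewrite (negbTE neq_ab) eq_sym (negbTE neq_ab) !eq_diag.
have -> : P b a = P a b by rewrite -{1}symP mxE.
have -> : Q b a = Q a b by rewrite -{1}symQ mxE.
(* (3/5, 4/5) is a unit vector with rational entries: no square root needed. *)
have unit_vec : (3 / 5) ^+ 2 + (4 / 5) ^+ 2 = 1 :> R by field.
by rewrite !(mulr0, addr0) => /(_ unit_vec); lra.
Qed.

Lemma mxtrace_block_le n (W : 'M[R]_(4 * n)) I J : psd W ->
  block W I J = block W J J -> \tr (block W J J) <= \tr (block W I I).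
Proof.
move=> psdW offW; apply: ler_sum => k _.
have W_IJ : W (bidx I k) (bidx J k) = block W J J k k by rewrite -offW mxE.
have W_JI : W (bidx J k) (bidx I k) = block W J J k k.
  by rewrite -W_IJ -{1}psdW.1 mxE.
have := psd_entry_diff_ge0 (bidx I k) (bidx J k) psdW.
by rewrite W_IJ W_JI !mxE; lra.
Qed.
End QuadraticForms.

Section QuaternionResidual.
Variable R : realFieldType.

Lemma sum_ord3 (F : 'I_3 -> R) :
  \sum_i F i = F (inord 0) + F (inord 1) + F (inord 2).
Proof.
rewrite !big_ord_recl big_ord0 addr0 !addrA.
by congr (F _ + F _ + F _); apply: val_inj; rewrite /= inordK.
Qed.

Lemma sum_ord4 (F : 'I_4 -> R) :
  \sum_i F i = F (inord 0) + F (inord 1) + F (inord 2) + F (inord 3).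
Proof.
rewrite !big_ord_recl big_ord0 addr0 !addrA.
by congr (F _ + F _ + F _ + F _); apply: val_inj; rewrite /= inordK.
Qed.

(* For pure quaternions x, y and a unit quaternion w, R(w) x = w x w^*, so
   ||y - R(w) x|| = ||y w - w x||; [residual_mx x y] is the matrix of the
   linear map w |-> y w - w x. *)
Definition residual_mx (x y : 'cV[R]_3) : 'M[R]_4 :=
  let d k := y (inord k) 0 - x (inord k) 0 in
  let s k := y (inord k) 0 + x (inord k) 0 in
  \matrix_(i < 4, j < 4)
    match val i, val j with
    | 0, 0 => 0      | 0, 1 => - d 0%N | 0, 2 => - d 1%N | 0, _ => - d 2%N
    | 1, 0 => d 0%N  | 1, 1 => 0       | 1, 2 => - s 2%N | 1, _ => s 1%N
    | 2, 0 => d 1%N  | 2, 1 => s 2%N   | 2, 2 => 0       | 2, _ => - s 0%N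
    | _, 0 => d 2%N  | _, 1 => - s 1%N | _, 2 => s 0%N   | _, _ => 0
    end.

Lemma sqnorm_rot_residual (w : 'cV[R]_4) (x y : 'cV[R]_3) : on_sphere w ->
  sqnorm (y - Rq w *m x) = sqnorm (residual_mx x y *m w).
Proof.
move=> unit_w.
have homogeneous : sqnorm (sqnorm w *: y - Rq w *m x)
                   = sqnorm w * sqnorm (residual_mx x y *m w).
  by rewrite /sqnorm !(sum_ord3, sum_ord4, mxE) /= !inordK //= /qc /=; ring.
by rewrite unit_w scale1r mul1r in homogeneous.
Qed.

Lemma rot_cost_mx_gram (x y : 'cV[R]_3) (Q : 'M[R]_4) : Q^T = Q ->
  (forall w, on_sphere w -> (w^T *m Q *m w) 0 0 = sqnorm (y - Rq w *m x)) ->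
  Q = (residual_mx x y)^T *m residual_mx x y.
Proof.
move=> symQ costQ; apply: sym_mx_eq_on_sphere => //; first by rewrite trmx_mul trmxK.
move=> w unit_w; rewrite costQ // sqnorm_rot_residual // sqnorm_qform.
by rewrite trmx_mul !mulmxA.
Qed.
End QuaternionResidual.

Section Replication.
Variable R : realFieldType.

Lemma rowsub_bidx_rep n (w : 'cV[R]_4) I : rowsub (bidx I) (rep n w) = w.
Proof.
apply/matrixP => a k; rewrite !mxE (ord1 k); congr (w _ 0); apply: val_inj => /=.
by rewrite mulnC modnMDl modn_small.
Qed.

Lemma block_rep_outer n (w : 'cV[R]_4) I J :
  block (rep n w *m (rep n w)^T) I J = w *m w^T.
Proof.
rewrite block_mxsub mxsub_mul -[colsub _ _]trmxK trmx_mxsub trmxK.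
by rewrite !rowsub_bidx_rep.
Qed.

Lemma rep_outer_sdr_feasible l (w : 'cV[R]_4) : on_sphere w ->
  sdr_feasible (rep l.+1 w *m (rep l.+1 w)^T).
Proof.
move=> unit_w; split; first exact: psd_outer.
split=> [i|]; rewrite !block_rep_outer //.
by rewrite mxtrace_mulC trace_mx11 -sqnorm_qform.
Qed.
End Replication.

Section Objective.
Variables (R : realFieldType) (l : nat).
Variables (Q : 'I_l -> 'M[R]_4) (c2 : 'I_l -> R) (calQ : 'M[R]_(4 * l.+1)).
Hypothesis calQ_blocksE : is_calQ Q c2 calQ.
Variables (k : nat) (L : 'I_l -> 'M[R]_(k, 4)).
Hypothesis Q_gram : forall i, Q i = (L i)^T *m L i.
Hypothesis c2_ge0 : forall i, 0 <= c2 i.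

Lemma obj_diag_blocks (W : 'M[R]_(4 * l.+1)) : W^T = W ->
  (forall i, block W ord0 (lift ord0 i) = block W (lift ord0 i) (lift ord0 i)) ->
  obj calQ c2 W = \sum_i (\tr (Q i *m block W (lift ord0 i) (lift ord0 i))
                          + c2 i * (1 - \tr (block W (lift ord0 i) (lift ord0 i)))).
Proof.
move=> symW offW; set B := fun i => block W (lift ord0 i) (lift ord0 i).
have W_i0 i : block W (lift ord0 i) ord0 = B i.
  by rewrite -{1}symW block_trmx offW /B -block_trmx symW.
have calQ_00 : block calQ ord0 ord0 = 0 by rewrite calQ_blocksE /calQ_blocks unlift_none.
have calQ_0i i : block calQ ord0 (lift ord0 i) = 2^-1 *: (Q i - (c2 i)%:M).
  by rewrite calQ_blocksE /calQ_blocks unlift_none liftK.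
have calQ_i0 i : block calQ (lift ord0 i) ord0 = 2^-1 *: (Q i - (c2 i)%:M).
  by rewrite calQ_blocksE /calQ_blocks unlift_none liftK.
have calQ_ij i j : block calQ (lift ord0 i) (lift ord0 j) = 0.
  by rewrite calQ_blocksE /calQ_blocks !liftK.
rewrite /obj mxtrace_mul_blocks big_ord_recl big_ord_recl calQ_00 mul0mx mxtrace0 add0r.
have half_term i : \tr (2^-1 *: (Q i - (c2 i)%:M) *m B i)
    = 2^-1 * (\tr (Q i *m B i) - c2 i * \tr (B i)).
  by rewrite -scalemxAl mxtraceZ mulmxBl mul_scalar_mx linearB /= mxtraceZ.
under eq_bigr => i _ do rewrite calQ_0i W_i0 half_term.
under [X in _ + X + _]eq_bigr => i _.
  rewrite big_ord_recl calQ_i0 offW half_term big1 ?addr0; last first.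
    by move=> j _; rewrite calQ_ij mul0mx mxtrace0.
  over.
by rewrite -!big_split; apply: eq_bigr => i _ /=; rewrite /B; field.
Qed.

Lemma obj_rep_outer (w : 'cV[R]_4) : on_sphere w ->
  obj calQ c2 (rep l.+1 w *m (rep l.+1 w)^T) = \sum_i (w^T *m Q i *m w) 0 0.
Proof.
move=> unit_w; have [[symW _] [offW trW]] := rep_outer_sdr_feasible l unit_w.
rewrite (obj_diag_blocks symW offW); apply: eq_bigr => i _.
rewrite !block_rep_outer in trW *; rewrite trW subrr mulr0 addr0.
by rewrite mulmxA mxtrace_mulC mulmxA trace_mx11.
Qed.

Lemma sdr_obj_ge0 W : sdr_feasible W -> 0 <= obj calQ c2 W.
Proof.
move=> [psdW [offW trW]]; rewrite (obj_diag_blocks psdW.1 offW).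
apply: sumr_ge0 => i _; apply: addr_ge0.
  rewrite Q_gram; apply: mxtrace_gram_mul_psd_ge0.
  by rewrite block_mxsub; exact: psd_mxsub.
by apply: mulr_ge0 => //; rewrite subr_ge0 -trW; exact: mxtrace_block_le.
Qed.
End Objective.

Theorem theorem3p1 (R : realFieldType) (l : nat) (w0 : 'cV[R]_4)
  (x y : 'I_l -> 'cV[R]_3) (c2 : 'I_l -> R)
  (Q : 'I_l -> 'M[R]_4) (calQ : 'M[R]_(4 * l.+1)) :
  on_sphere w0 ->
  (forall i, y i = Rq w0 *m x i) ->
  (forall i, 0 <= c2 i) ->
  (forall i, (Q i)^T = Q i /\
     forall w : 'cV[R]_4, on_sphere w ->
       (w^T *m Q i *m w) 0 0 = sqnorm (y i - Rq w *m x i)) ->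
  calQ^T = calQ ->
  is_calQ Q c2 calQ ->
  qcqp_global_min calQ c2 (rep l.+1 w0) /\
  sdr_global_min calQ c2 (rep l.+1 w0 *m (rep l.+1 w0)^T) /\
  sdr_tight calQ c2.
Proof.
move=> unit_w0 noiseless c2_ge0 costQ _ calQ_blocksE.
set om := rep l.+1 w0.
have Q_gram i : Q i = (residual_mx (x i) (y i))^T *m residual_mx (x i) (y i).
  exact: rot_cost_mx_gram (costQ i).1 (costQ i).2.
have obj_om : obj calQ c2 (om *m om^T) = 0.
  rewrite (obj_rep_outer calQ_blocksE unit_w0); apply: big1 => i _.
  rewrite (costQ i).2 // noiseless subrr.
  by apply: big1 => k _; rewrite mxE expr0n.
have sdr_min : sdr_global_min calQ c2 (om *m om^T).
  split=> [|W feasW]; first exact: rep_outer_sdr_feasible.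
  by rewrite obj_om; exact: (sdr_obj_ge0 calQ_blocksE Q_gram c2_ge0).
have qcqp_min : qcqp_global_min calQ c2 om.
  split=> [|om' feas_om']; first exact: sdr_min.1.2.
  by apply: sdr_min.2; split=> //; exact: psd_outer.
by split=> //; split=> //; exists om.
Qed.
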